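(* Let $n=1$ and let $\mathbb{T}$ be a radical tower over $\mathbb{C}(t)$ such that its tower variety $\mathcal{V}_\mathbb{T}$ is a rational curve. Then for any radical parametrization $\mathcal{P}$ whose entries lie in the last field of $\mathbb{T}$, the radical variety $\mathcal{V}_\mathcal{P}$ is a rational curve.
   Context: A radical tower $\mathbb{T}$ over $\mathbb{C}(t)$ is a tower of fields $\mathbb{F}_0=\mathbb{C}(t)\subseteq\dots\subseteq\mathbb{F}_m$ with $\mathbb{F}_i=\mathbb{F}_{i-1}(\delta_i)$, $\delta_i^{e_i}=\alpha_i\in\mathbb{F}_{i-1}$, $e_i\in\mathbb{N}$, where the $\delta_i$ are realized as analytic functions $\delta_i(t)$ by fixing branch values at some point. A radical parametrization is a tuple $\overline{x}=(x_1,\dots,x_r)$, $r>1$, of elements of $\mathbb{F}_m$ whose derivative with respect to $t$ (derivation extended to $\mathbb{F}_m$) is nonzero (Jacobian of rank $1$). The tower variety is $\mathcal{V}_\mathbb{T}=\overline{\{(t,\delta_1(t),\dots,\delta_m(t))\}}\subset\mathbb{C}^{1+m}$ (Zariski closure of the image of $t\mapsto(t,\overline{\delta}(t))$). The radical variety $\mathcal{V}_\mathcal{P}\subset\mathbb{C}^r$ is the Zariski closure of the image $\{\overline{x}(t)\}$. *)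

From HB Require Import structures.
From mathcomp Require Import all_boot all_order all_algebra.
From mathcomp Require Import all_classical all_reals all_analysis.
From mathcomp Require Import complex.
From mathcomp Require mpoly.
Set Implicit Arguments. Unset Strict Implicit. Unset Printing Implicit Defensive.
Import Order.TTheory GRing.Theory Num.Theory.
Import numFieldNormedType.Exports.
Local Open Scope classical_set_scope.
Local Open Scope ring_scope.

Section RadicalDefs.
Variable R : realType.
Local Notation C := R[i].

Definition cpoly (k : nat) := mpoly.mpoly k C.
Definition peval (k : nat) (p : cpoly k) (v : 'I_k -> C) : C := mpoly.meval v p.

Definition zariski_closure (k : nat) (S : set ('I_k -> C)) : set ('I_k -> C) :=
  [set x | forall p : cpoly k, (forall y, S y -> peval p y = 0) -> peval p x = 0].

(* C^o is C with its metric topology given by the complex modulus; the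
   complex derivative of f : C -> C at t is 'D_1 (f : C^o -> C^o) t, and
   f is holomorphic at t iff derivable (f : C^o -> C^o) t 1. *)

(* A subset V of C^k is a rational curve: it is the Zariski closure of the image
   of a non-constant rational parametrization s |-> (P_j(s)/Q_j(s))_j,
   P_j, Q_j in C[s], Q_j <> 0. *)
Definition rational_curve (k : nat) (V : set ('I_k -> C)) : Prop :=
  exists (P Q : 'I_k -> {poly C}),
    (forall j, Q j != 0) /\
    (exists j, forall c : C, P j != c *: Q j) /\
    V = zariski_closure
          [set x | exists s : C, (forall j, (Q j).[s] != 0) /\
                                 x = (fun j => (P j).[s] / (Q j).[s])].

Variable m : nat.
Variable delta : 'I_m -> C -> C.

Definition tower_pt (t : C) : 'I_m.+1 -> C :=
  fun k => if unlift ord0 k is Some i then delta i t else t.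

(* the point (t, delta_1(t), ..., delta_i(t)) of C^(1+i), for i < m
   (zero-based: delta j with j < i) *)
Definition tower_pt_lt (i : 'I_m) (t : C) : 'I_i.+1 -> C :=
  fun k => if unlift ord0 k is Some j then delta (widen_ord (ltnW (ltn_ord i)) j) t
           else t.

(* Analytic realization of a radical tower
     F_0 = C(t), F_(i+1) = F_i(delta_i), delta_i ^ e_i = alpha_i in F_i,
   alpha_i = A_i(t, delta_0, ..., delta_(i-1)) / B_i(t, delta_0, ..., delta_(i-1)):
   the delta_i are holomorphic functions on a nonempty connected open set U
   (the branches are fixed), the denominators B_i are nonzero elements of F_i
   (not identically zero on U) and the radical relations hold on U. *)
Definition radical_tower (e : 'I_m -> nat) (U : set C)
    (A B : forall i : 'I_m, cpoly i.+1) : Prop :=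
  [/\ open (U : set C^o) /\ connected (U : set C^o) /\ U !=set0,
      (forall i t, U t -> derivable (delta i : C^o -> C^o) t 1),
      (forall i, 0 < e i)%N,
      (forall i, exists2 t, U t & peval (B i) (@tower_pt_lt i t) != 0) &
      (forall i t, U t ->
         delta i t ^+ e i * peval (B i) (@tower_pt_lt i t) = peval (A i) (@tower_pt_lt i t))].

Definition tower_variety (U : set C) : set ('I_m.+1 -> C) :=
  zariski_closure [set x | exists2 t, U t & x = tower_pt t].

Variable U : set C.
Variable r : nat.
Variables N D : 'I_r -> cpoly m.+1.

Definition rp_fun (j : 'I_r) (t : C) : C :=
  peval (N j) (tower_pt t) / peval (D j) (tower_pt t).

(* (x_1, ..., x_r), x_j = N_j/D_j in F_m with D_j <> 0 in F_m, is a radical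
   parametrization: r > 1 and its derivative (w.r.t. t) is nonzero, i.e. some
   x_j has derivative not identically zero. *)
Definition radical_parametrization : Prop :=
  [/\ (1 < r)%N,
      (forall j, exists2 t, U t & peval (D j) (tower_pt t) != 0) &
      exists j t, [/\ U t, peval (D j) (tower_pt t) != 0 & 'D_1 (rp_fun j : C^o -> C^o) t != 0]].

Definition radical_variety : set ('I_r -> C) :=
  zariski_closure [set x | exists t, [/\ U t, (forall j, peval (D j) (tower_pt t) != 0)
                                      & x = (fun j => rp_fun j t)]].

End RadicalDefs.

From HB Require Import structures.
From mathcomp Require Import all_boot all_order all_algebra.
From mathcomp Require Import all_classical all_reals all_analysis.
From mathcomp Require Import complex.
From mathcomp Require mpoly.
(* Only the ring structures: the notations of mpoly clash with those of analysis. *)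
Import (canonicals) mpoly.
From mathcomp Require Import ring zify.
Set Implicit Arguments. Unset Strict Implicit. Unset Printing Implicit Defensive.
Import Order.TTheory GRing.Theory Num.Theory.
Import numFieldNormedType.Exports.
Local Open Scope classical_set_scope.
Local Open Scope ring_scope.

(* The tower variety is the Zariski closure of the image of a rational map [phi]
   with denominator [L], so a polynomial vanishes at every [tau t = (t, delta(t))]
   iff it vanishes at every [phi s] with [L(s) <> 0]. Substituting [phi] into the
   entries [x_j = N_j / D_j] gives rational functions [psi_j]; clearing
   denominators, a polynomial vanishes on the image of [x] iff it vanishes on the
   image of [psi], so both images have the same Zariski closure. Finally [psi] is
   not constant: otherwise an entry [x_j] with nonzero derivative would be
   constant off the zeros of [prod_k D_k(tau t)], which are isolated because they
   are roots of a nonzero polynomial. *)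

Definition fun_subring (X : Type) (K : nzRingType) (S : (X -> K) -> Prop) :=
  [/\ forall c, S (fun=> c),
      forall f g, S f -> S g -> S (fun x => f x + g x) &
      forall f g, S f -> S g -> S (fun x => f x * g x)].

Section FunSubring.
Variables (X : Type) (K : comNzRingType) (S : (X -> K) -> Prop).
Hypothesis S_subring : fun_subring S.

Lemma fun_subringE f g : f =1 g -> S f -> S g.
Proof. by move=> /funext->. Qed.

Lemma fun_subring_sum (I : Type) (s : seq I) (F : I -> X -> K) :
  (forall i, S (F i)) -> S (fun x => \sum_(i <- s) F i x).
Proof.
have [S_cst S_add _] := S_subring; move=> SF; elim: s => [|i s IHs].
  by apply: fun_subringE (S_cst 0) => x; rewrite big_nil.
by apply: fun_subringE (S_add _ _ (SF i) IHs) => x; rewrite big_cons.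
Qed.

Lemma fun_subring_prod (I : Type) (s : seq I) (F : I -> X -> K) :
  (forall i, S (F i)) -> S (fun x => \prod_(i <- s) F i x).
Proof.
have [S_cst _ S_mul] := S_subring; move=> SF; elim: s => [|i s IHs].
  by apply: fun_subringE (S_cst 1) => x; rewrite big_nil.
by apply: fun_subringE (S_mul _ _ (SF i) IHs) => x; rewrite big_cons.
Qed.

Lemma fun_subring_exp f n : S f -> S (fun x => f x ^+ n).
Proof.
move=> Sf; apply: fun_subringE (fun_subring_prod (index_iota 0 n) (fun=> Sf)) => x.
by rewrite prodr_const_nat subn0.
Qed.

Lemma fun_subring_horner (p : {poly K}) f : S f -> S (fun x => p.[f x]).
Proof.
have [S_cst _ S_mul] := S_subring; move=> Sf.
apply: fun_subringE (fun_subring_sum (index_enum 'I_(size p)) _) => [x|i].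
  by rewrite horner_coef.
by apply: S_mul; [exact: S_cst|exact: fun_subring_exp].
Qed.

Lemma fun_subring_horner2 (H : {poly {poly K}}) f g :
  S f -> S g -> S (fun x => H.[(g x)%:P].[f x]).
Proof.
have [_ _ S_mul] := S_subring; move=> Sf Sg.
apply: fun_subringE (fun_subring_sum (index_enum 'I_(size H)) _) => [x|j].
  rewrite [in RHS](horner_coef H) horner_sum; apply: eq_bigr => j _.
  by rewrite hornerM -rmorphXn hornerC.
by apply: S_mul; [exact: fun_subring_horner|exact: fun_subring_exp].
Qed.

Lemma fun_subring_meval k (p : mpoly.mpoly k K) (f : 'I_k -> X -> K) :
  (forall i, S (f i)) -> S (fun x => mpoly.meval (fun i => f i x) p).
Proof.
have [S_cst _ S_mul] := S_subring; move=> Sf.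
apply: fun_subringE (fun_subring_sum (mpoly.msupp p) _) => [x|mon].
  by rewrite mpoly.mevalE.
by apply: S_mul; [exact: S_cst|apply: fun_subring_prod => i; exact: fun_subring_exp].
Qed.

End FunSubring.

Definition poly_fun (K : nzRingType) (f : K -> K) :=
  exists p : {poly K}, f =1 horner p.

Definition mpoly_fun (K : nzRingType) k (f : ('I_k -> K) -> K) :=
  exists p : mpoly.mpoly k K, f =1 fun y => mpoly.meval y p.

Lemma poly_fun_subring (K : comNzRingType) : fun_subring (@poly_fun K).
Proof.
split=> [c|f g [p fp] [q gq]|f g [p fp] [q gq]].
- by exists c%:P => x; rewrite hornerC.
- by exists (p + q) => x; rewrite hornerD fp gq.
- by exists (p * q) => x; rewrite hornerM fp gq.
Qed.

Lemma mpoly_fun_subring (K : comNzRingType) k : fun_subring (@mpoly_fun K k).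
Proof.
split=> [c|f g [p fp] [q gq]|f g [p fp] [q gq]].
- by exists (mpoly.mpolyC k c) => x; rewrite mpoly.mevalC.
- by exists (p + q) => x; rewrite mpoly.mevalD fp gq.
- by exists (p * q) => x; rewrite mpoly.mevalM fp gq.
Qed.

Lemma mpoly_fun_coord (K : comNzRingType) k (i : 'I_k) :
  mpoly_fun (fun y : 'I_k -> K => y i).
Proof. by exists (mpoly.mpolyX K (mpoly.mnm1 i)) => y; rewrite mpoly.mevalXU. Qed.

Lemma mulr_expf_eq0 (K : idomainType) (x y : K) n :
  y != 0 -> (x * y ^+ n == 0) = (x == 0).
Proof. by move=> y_neq0; rewrite mulf_eq0 expf_eq0 (negbTE y_neq0) andbF orbF. Qed.

Section Localization.
Variables (X : Type) (K : fieldType) (S : (X -> K) -> Prop) (l : X -> K).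
Hypothesis S_subring : fun_subring S.

Definition localized (f : X -> K) :=
  exists (g : X -> K) (d : nat), S g /\ forall x, l x != 0 -> f x * l x ^+ d = g x.

Lemma localized_subring : S l -> fun_subring localized.
Proof.
have [S_cst S_add S_mul] := S_subring; move=> Sl.
split=> [c|f f' [g [d [Sg fg]]] [g' [d' [Sg' fg']]]|
          f f' [g [d [Sg fg]]] [g' [d' [Sg' fg']]]].
- by exists (fun=> c), 0%N; split=> // x _; rewrite mulr1.
- exists (fun x => g x * l x ^+ d' + g' x * l x ^+ d), (d + d')%N; split.
    by apply: S_add; apply: S_mul => //; exact: fun_subring_exp.
  by move=> x lx; rewrite -fg // -fg' // exprD; ring.
- exists (fun x => g x * g' x), (d + d')%N; split; first exact: S_mul.
  by move=> x lx; rewrite -fg // -fg' // exprD; ring.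
Qed.

Lemma localized_div (num den cof : X -> K) : S num -> S cof ->
  (forall x, l x = den x * cof x) -> localized (fun x => num x / den x).
Proof.
have [_ _ S_mul] := S_subring; move=> Snum Scof l_eq.
exists (fun x => num x * cof x), 1%N; split; first exact: S_mul.
by move=> x; rewrite l_eq expr1 mulf_eq0 negb_or => /andP[den_x _]; rewrite mulrA divfK.
Qed.

End Localization.

Lemma meval_prod_neq0 (K : idomainType) k (I : finType) (D : I -> mpoly.mpoly k K) y :
  mpoly.meval y (\prod_i D i) != 0 <-> forall i, mpoly.meval y (D i) != 0.
Proof.
rewrite rmorph_prod; split=> [/prodf_neq0 Dy i|Dy]; first exact: Dy.
by apply/prodf_neq0 => i _; exact: Dy.
Qed.

Lemma mpoly_clear_denominators (K : fieldType) k r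
    (N D : 'I_r -> mpoly.mpoly k K) (F : mpoly.mpoly r K) :
  exists G : mpoly.mpoly k K, forall y, mpoly.meval y G = 0 <->
    ((forall j, mpoly.meval y (D j) != 0) ->
     mpoly.meval (fun j => mpoly.meval y (N j) / mpoly.meval y (D j)) F = 0).
Proof.
pose E := \prod_j D j; pose cof j := \prod_(i | i != j) D i.
have [g [d [[G gG] g_eq]]] : localized (@mpoly_fun K k) (fun y => mpoly.meval y E)
    (fun y => mpoly.meval (fun j => mpoly.meval y (N j) / mpoly.meval y (D j)) F).
  apply: (fun_subring_meval (localized_subring (mpoly_fun_subring K k) _)) => [|j].
    by exists E.
  apply: (localized_div _ (cof := fun y => mpoly.meval y (cof j))).
  - exact: mpoly_fun_subring.
  - by exists (N j).
  - by exists (cof j).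
  - by move=> y; rewrite /E (bigD1 j) //= mpoly.mevalM.
exists (G * E) => y; rewrite mpoly.mevalM -gG.
have [Ey0|/meval_prod_neq0 Dy] := eqVneq (mpoly.meval y E) 0.
  rewrite Ey0 mulr0; split=> // _ /meval_prod_neq0.
  by rewrite Ey0 eqxx.
have Ey_neq0 : mpoly.meval y E != 0 by exact/meval_prod_neq0.
split=> [/eqP|Fy]; last by rewrite -g_eq // Fy // !mul0r.
by rewrite mulf_eq0 (negbTE Ey_neq0) orbF -g_eq // mulr_expf_eq0 // => /eqP.
Qed.

Lemma polys_linear_dependent (K : fieldType) (I : finType) (w : I -> {poly K}) M :
  (forall i, size (w i) <= M)%N -> (M < #|I|)%N ->
  exists2 c : I -> K, (exists i, c i != 0) & \sum_i c i *: w i = 0.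
Proof.
move=> size_w ltMI; pose A := \matrix_(i < #|I|, j < M) (w (enum_val i))`_j.
have [v vA v_neq0] : exists2 v : 'rV_#|I|, v *m A = 0 & v != 0.
  apply: contrapT => v_indep.
  have : row_free A.
    apply: inj_row_free => v vA; apply/eqP; apply: contraT => v_neq0.
    by case: v_indep; exists v.
  by rewrite -row_leq_rank leqNgt (leq_ltn_trans (rank_leq_col A)).
exists (fun i => v 0 (enum_rank i)).
  by have [j vj] := rV0Pn _ v_neq0; exists (enum_val j); rewrite enum_valK.
apply/polyP => k; rewrite coef_sum coef0.
rewrite (reindex (enum_val : 'I_#|I| -> I)) /=; last first.
  by apply: onW_bij; exact: enum_val_bij.
have [ltkM|leMk] := ltnP k M.
  have := congr1 (fun B : 'M[K]_(1, M) => B 0 (Ordinal ltkM)) vA; rewrite !mxE => vAk.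
  by apply: etrans vAk; apply: eq_bigr => j _; rewrite enum_valK coefZ mxE.
by rewrite big1 // => j _; rewrite coefZ nth_default ?mulr0 // (leq_trans (size_w _)).
Qed.

Lemma size_mul_leq_add (R : nzRingType) (p q : {poly R}) a b :
  (size p <= a.+1)%N -> (size q <= b.+1)%N -> (size (p * q)%R <= (a + b).+1)%N.
Proof. by move=> sp sq; apply: leq_trans (size_polyMleq _ _) _; lia. Qed.

Lemma size_exp_leq_mul (R : nzRingType) (p : {poly R}) a n :
  (size p <= a.+1)%N -> (size (p ^+ n) <= (a * n).+1)%N.
Proof.
move=> sp; apply: leq_trans (size_poly_exp_leq _ _) _.
by rewrite ltnS leq_mul2r; apply/orP; right; lia.
Qed.

(* For [i, j < n = 2d + 2] the [n^2] polynomials [a^i b^j l^(2n-i-j)] have size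
   at most [2dn + 1 < n^2], hence satisfy a nontrivial linear relation. *)
Lemma fractions_alg_dependent (K : fieldType) (a b l : {poly K}) :
  exists2 H : {poly {poly K}}, H != 0 &
    forall s, l.[s] != 0 -> H.[(b.[s] / l.[s])%:P].[a.[s] / l.[s]] = 0.
Proof.
pose d := (size a + size b + size l)%N; pose n := d.*2.+2; pose k := n.*2.
pose w (ij : 'I_n * 'I_n) := a ^+ ij.1 * b ^+ ij.2 * l ^+ (k - ij.1 - ij.2).
have size_w ij : (size (w ij) <= (d * k).+1)%N.
  have ij_le : (ij.1 + ij.2 <= k)%N.
    by case: ij => [[i ltin] [j ltjn]] /=; rewrite /k; lia.
  have -> : (d * k = d * ij.1 + d * ij.2 + d * (k - ij.1 - ij.2))%N.
    by rewrite -!mulnDr; congr (_ * _)%N; lia.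
  have [sa sb sl] : [/\ size a <= d.+1, size b <= d.+1 & size l <= d.+1]%N.
    by rewrite /d; split; lia.
  by apply: size_mul_leq_add; [apply: size_mul_leq_add|]; exact: size_exp_leq_mul.
have [|c [ij0 c_ij0] c_w] := polys_linear_dependent size_w.
  by rewrite card_prod card_ord /n /k; nia.
exists (\poly_(j < n) \poly_(i < n) c (inord i, inord j)).
  apply: contra_neq c_ij0 => /(congr1 (fun H : {poly {poly K}} => H`_ij0.2`_ij0.1)).
  by rewrite !(coef_poly, ltn_ord) !inord_val !coef0 -surjective_pairing.
move=> s ls; apply: (mulIf (expf_neq0 k ls)); rewrite mul0r.
rewrite -[RHS](horner0 s) -c_w horner_sum horner_poly horner_sum mulr_suml.
under eq_bigr => j _ do rewrite hornerM -rmorphXn hornerC horner_poly !mulr_suml.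
rewrite exchange_big pair_bigA; apply: eq_bigr => -[i j] _ /=.
rewrite !inord_val hornerZ /w !hornerM !horner_exp.
have kE : k = (i + j + (k - i - j))%N.
  by have := ltn_ord i; have := ltn_ord j; rewrite /k; lia.
rewrite {1}kE !exprD !expr_div_n /=; field.
by rewrite !expf_neq0.
Qed.

Lemma poly_eq_mulXn (R : nzRingType) (p : {poly R}) : p != 0 ->
  exists2 q : {poly R}, q`_0 != 0 & exists k, p = q * 'X^k.
Proof.
move=> p_neq0; have [k [q]] := multiplicity_XsubC p 0.
rewrite p_neq0 /root horner_coef0 subr0 => q0 ->.
by exists q => //; exists k.
Qed.

Section RationalFunctions.
Variables (F : closedFieldType) (L : {poly F}).
Local Notation ratfun := (localized (@poly_fun F) (horner L)).

Lemma ratfunP f : ratfun f ->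
  exists (p : {poly F}) (d : nat), forall s, L.[s] != 0 -> f s * L.[s] ^+ d = p.[s].
Proof. by move=> [g [d [[p gp] fg]]]; exists p, d => s Ls; rewrite fg. Qed.

Lemma ratfun_subring : fun_subring ratfun.
Proof. by apply: localized_subring; [exact: poly_fun_subring | exists L]. Qed.

Lemma ratfun_alg_dependent f g : ratfun f -> ratfun g ->
  exists2 H : {poly {poly F}}, H != 0 &
    forall s, L.[s] != 0 -> H.[(g s)%:P].[f s] = 0.
Proof.
move=> /ratfunP[p [d fp]] /ratfunP[q [e gq]].
have [H H_neq0 H_root] :=
  fractions_alg_dependent (p * L ^+ e) (q * L ^+ d) (L ^+ (d + e)).
exists H => // s Ls; have := H_root s; rewrite !hornerM !horner_exp -fp // -gq //.
rewrite expf_neq0 // => /(_ isT); congr (_.[_%:P].[_] = 0); rewrite exprD; field.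
all: by rewrite !expf_neq0.
Qed.

Hypothesis L_neq0 : L != 0.

Lemma ratfun_mul_eq0 f g : ratfun f -> ratfun g ->
  (forall s, L.[s] != 0 -> f s * g s = 0) ->
  (forall s, L.[s] != 0 -> f s = 0) \/ (forall s, L.[s] != 0 -> g s = 0).
Proof.
move=> /ratfunP[p [d fp]] /ratfunP[q [e gq]] fg0.
have : p * q * L = 0.
  apply/eqP; apply: contraT => /closed_nonrootP[s]; rewrite /root !hornerM.
  have [->|Ls] := eqVneq L.[s] 0; first by rewrite mulr0 eqxx.
  by rewrite -fp // -gq // mulrACA fg0 // mul0r mul0r eqxx.
move/eqP; rewrite !mulf_eq0 (negbTE L_neq0) orbF => /orP[/eqP p0|/eqP q0]; [left|right].
- by move=> s Ls; apply/eqP; rewrite -(mulr_expf_eq0 _ d Ls) fp // p0 horner0.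
- by move=> s Ls; apply/eqP; rewrite -(mulr_expf_eq0 _ e Ls) gq // q0 horner0.
Qed.

End RationalFunctions.

Lemma zariski_closure_eqP (R : realType) k (S1 S2 : set ('I_k -> R[i])) :
  zariski_closure S1 = zariski_closure S2 <->
  forall p, (forall y, S1 y -> peval p y = 0) <-> (forall y, S2 y -> peval p y = 0).
Proof.
split=> [S12 p|vanish_eq]; last first.
  by apply/seteqP; split=> x x_cl p p_vanish; apply: x_cl; apply/(vanish_eq p).
have sub_closure (S : set ('I_k -> R[i])) : S `<=` zariski_closure S.
  by move=> y Sy q; apply.
split=> p_vanish y Sy.
- by have := sub_closure _ y Sy; rewrite -S12; apply.
- by have := sub_closure _ y Sy; rewrite S12; apply.
Qed.

Section PointwiseAnalysis.
Variables (K : numFieldType) (t0 : K).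

Lemma continuous_at_subring :
  fun_subring (fun f : K -> K => {for t0, continuous (f : K^o -> K^o)}).
Proof.
split=> [c|f g fc gc|f g fc gc]; first exact: cst_continuous.
  exact: (cvgD fc gc).
exact: (cvgM fc gc).
Qed.

Lemma poly_neq0_near (q : {poly K}) :
  q != 0 -> \forall t \near (t0 : K^o)^', q.[t] != 0.
Proof.
move=> q_neq0; have [k [q1]] := multiplicity_XsubC q t0.
rewrite q_neq0 => /= q1t0 ->.
have q1_cont : {for t0, continuous ((fun t => q1.[t]) : K^o -> K^o)}.
  exact: (fun_subring_horner continuous_at_subring q1 (f := id) cvg_id).
have q1_near : \forall t \near (t0 : K^o), q1.[t] != 0 by exact: cvgr_neq0 q1_cont q1t0.
apply: filterS2 (nbhs_dnbhs q1_near) (nbhs_dnbhs_neq (t0 : K^o)) => t q1t tt0.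
by rewrite hornerM horner_exp hornerXsubC mulf_neq0 // expf_neq0 // subr_eq0.
Qed.

Lemma derive_dnbhs_cst (f : K -> K) (c : K) :
  {for t0, continuous (f : K^o -> K^o)} -> (\forall t \near (t0 : K^o)^', f t = c) ->
  'D_1 (f : K^o -> K^o) t0 = 0.
Proof.
move=> f_cont f_c.
have ft0 : f t0 = c.
  apply: (cvg_unique (@norm_hausdorff _ K^o) (F := (f : K^o -> K^o) @ (t0 : K^o)^')).
  - exact: cvg_within_filter.
  - exact: cvg_near_cst.
rewrite (@near_eq_derive _ _ _ _ (cst c)) ?derive_cst //.
change (nbhs (t0 : K^o) (fun t => f t = cst c t)); rewrite dnbhsE; split=> //.
by apply/principal_filterP.
Qed.

End PointwiseAnalysis.

Section TowerParametrization.
Variables (R : realType) (m : nat) (delta : 'I_m -> R[i] -> R[i]) (U : set R[i]).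
Variables P Q : 'I_m.+1 -> {poly R[i]}.
Hypothesis Q_neq0 : forall j, Q j != 0.
Hypothesis tower_variety_eq : tower_variety delta U = zariski_closure
  [set x | exists s, (forall j, (Q j).[s] != 0) /\ x = (fun j => (P j).[s] / (Q j).[s])].

Local Notation C := R[i].
Local Notation tau := (tower_pt delta).
Let L := \prod_j Q j.
Let phi s : 'I_m.+1 -> C := fun j => (P j).[s] / (Q j).[s].
Local Notation ratfun := (localized (@poly_fun C) (horner L)).

Let L_neq0 : L != 0. Proof. exact/prodf_neq0. Qed.

Lemma tower_vanishP G : (forall t, U t -> peval G (tau t) = 0) <->
  (forall s, L.[s] != 0 -> peval G (phi s) = 0).
Proof.
have L_neq0P s : L.[s] != 0 <-> forall j, (Q j).[s] != 0.
  by rewrite horner_prod; split=> [/prodf_neq0 Qs j|Qs]; [exact: Qs|exact/prodf_neq0].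
have := tower_variety_eq; rewrite /tower_variety => /zariski_closure_eqP/(_ G) vanish_eq.
split=> [tauG s /L_neq0P Qs|phiG t Ut].
- by apply: (vanish_eq.1 _ (phi s)); [move=> _ [t Ut ->]; exact: tauG|exists s].
- by apply: (vanish_eq.2 _ (tau t)); [move=> _ [s [Qs ->]]; exact/phiG/L_neq0P|exists t].
Qed.

Lemma ratfun_phi j : ratfun (fun s => phi s j).
Proof.
apply: (localized_div (poly_fun_subring C) (cof := horner (\prod_(k | k != j) Q k))).
- by exists (P j).
- by exists (\prod_(k | k != j) Q k).
- by move=> s; rewrite /L (bigD1 j) //= hornerM.
Qed.

Lemma ratfun_peval_phi G : ratfun (fun s => peval G (phi s)).
Proof. exact: (fun_subring_meval (ratfun_subring _) G ratfun_phi). Qed.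

(* [phi_0] and [E o phi] are algebraically dependent. Dividing the relation by
   the largest power of [E] gives [H1] such that [H1(E(y), y_0)] vanishes on the
   tower variety while [H1(0, .)] is a nonzero polynomial; as [tau_0(t) = t],
   every zero [t] of [E o tau] is a root of [H1(0, .)]. *)
Lemma tau_zeros_in_roots (E : cpoly R m.+1) :
  (exists2 s, L.[s] != 0 & peval E (phi s) != 0) ->
  exists2 q : {poly C}, q != 0 & forall t, U t -> peval E (tau t) = 0 -> q.[t] = 0.
Proof.
move=> [s0 Ls0 Es0].
have [H H_neq0 H_root] := ratfun_alg_dependent (ratfun_phi ord0) (ratfun_peval_phi E).
have [H1 H1_0 [k H_eq]] := poly_eq_mulXn H_neq0.
have H1_Ek s : L.[s] != 0 ->
    H1.[(peval E (phi s))%:P].[phi s ord0] * peval E (phi s) ^+ k = 0.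
  move=> Ls; have := H_root s Ls.
  by rewrite H_eq hornerM hornerXn -rmorphXn /= hornerM hornerC.
have [H1_root|/(_ s0 Ls0)/eqP] := ratfun_mul_eq0 L_neq0
    (fun_subring_horner2 (ratfun_subring _) H1 (ratfun_phi ord0) (ratfun_peval_phi E))
    (fun_subring_exp (ratfun_subring _) k (ratfun_peval_phi E)) H1_Ek; last first.
  by rewrite expf_eq0 (negbTE Es0) andbF.
have [G G_eq] : mpoly_fun (fun y => H1.[(peval E y)%:P].[y ord0]).
  apply: (fun_subring_horner2 (mpoly_fun_subring C m.+1) H1 (mpoly_fun_coord C ord0)).
  by exists E.
exists H1`_0 => // t Ut Et; have := (tower_vanishP G).2 _ t Ut.
rewrite /peval -G_eq -/(peval E (tau t)) Et polyC0 horner_coef0 /tower_pt unlift_none.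
by apply=> s Ls; rewrite -G_eq; exact: H1_root.
Qed.

Section RadicalParametrization.
Variables (r : nat) (N D : 'I_r -> cpoly R m.+1).
Hypothesis r_gt0 : (0 < r)%N.
Hypothesis D_tau_neq0 : forall j, exists2 t, U t & peval (D j) (tau t) != 0.
Variables (numN numD : 'I_r -> {poly C}) (expN expD : 'I_r -> nat).
Hypothesis numNP :
  forall j s, L.[s] != 0 -> peval (N j) (phi s) * L.[s] ^+ expN j = (numN j).[s].
Hypothesis numDP :
  forall j s, L.[s] != 0 -> peval (D j) (phi s) * L.[s] ^+ expD j = (numD j).[s].

(* The extra factor [L] confines the domain of [psi] to [L <> 0]. *)
Let psiP j := numN j * L ^+ (expD j).+1.
Let psiQ j := numD j * L ^+ (expN j).+1.
Let psi_image := [set x | exists s, (forall j, (psiQ j).[s] != 0) /\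
                                    x = (fun j => (psiP j).[s] / (psiQ j).[s])].

Lemma psiQ_neq0 j : psiQ j != 0.
Proof.
rewrite mulf_neq0 ?expf_neq0 //; have [t Ut Dt] := D_tau_neq0 j.
apply: contra_neq Dt => numD0; apply: (tower_vanishP (D j)).2 t Ut => s Ls.
by apply/eqP; rewrite -(mulr_expf_eq0 _ (expD j) Ls) numDP // numD0 horner0.
Qed.

Lemma psiQ_neq0P s : (forall j, (psiQ j).[s] != 0) <->
  L.[s] != 0 /\ forall j, peval (D j) (phi s) != 0.
Proof.
split=> [psiQs|[Ls Ds] j]; last first.
  by rewrite hornerM -numDP // horner_exp !mulf_neq0 ?expf_neq0.
have Ls : L.[s] != 0.
  apply: contraNneq (psiQs (Ordinal r_gt0)) => Ls0.
  by rewrite hornerM horner_exp Ls0 expr0n mulr0.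
by split=> // j; apply: contraNneq (psiQs j) => Dj0; rewrite hornerM -numDP // Dj0 !mul0r.
Qed.

Lemma psi_eq s j : L.[s] != 0 -> peval (D j) (phi s) != 0 ->
  (psiP j).[s] / (psiQ j).[s] = peval (N j) (phi s) / peval (D j) (phi s).
Proof.
move=> Ls Ds; rewrite !hornerM !horner_exp -numNP // -numDP // !exprS.
by field; rewrite Ds Ls !expf_neq0.
Qed.

Lemma radical_vanishP F :
  (forall y, [set x | exists t, [/\ U t, (forall j, peval (D j) (tau t) != 0)
                                  & x = (fun j => rp_fun delta N D j t)]] y ->
     peval F y = 0) <->
  (forall y, psi_image y -> peval F y = 0).
Proof.
have [G G_eq] := mpoly_clear_denominators N D F.
apply: (@iff_trans _ (forall t, U t -> peval G (tau t) = 0)).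
  split=> [Fx t Ut|Gtau _ [t [Ut Dt ->]]]; last exact: (G_eq _).1 (Gtau t Ut) Dt.
  by apply/G_eq => Dt; apply: Fx; exists t.
apply: iff_trans (tower_vanishP G) _.
split=> [Gphi _ [s [/psiQ_neq0P[Ls Ds] ->]]|Fpsi s Ls].
  rewrite (_ : (fun j => _) = fun j => peval (N j) (phi s) / peval (D j) (phi s)).
    exact: (G_eq _).1 (Gphi s Ls) Ds.
  by apply/funext => j; exact: psi_eq.
apply/G_eq => Ds; rewrite -(Fpsi (fun j => (psiP j).[s] / (psiQ j).[s])).
  by congr (peval F _); apply/funext => j; rewrite psi_eq ?Ds.
by exists s; split=> //; apply/psiQ_neq0P.
Qed.

Lemma radical_variety_eq : radical_variety delta U N D = zariski_closure psi_image.
Proof. exact/zariski_closure_eqP/radical_vanishP. Qed.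

Hypothesis U_open : open (U : set C^o).
Hypothesis delta_der : forall i t, U t -> derivable (delta i : C^o -> C^o) t 1.

Lemma rp_fun_continuous j t : U t -> peval (D j) (tau t) != 0 ->
  {for t, continuous (rp_fun delta N D j : C^o -> C^o)}.
Proof.
move=> Ut Dt.
have tau_cont k : {for t, continuous ((fun s => tau s k) : C^o -> C^o)}.
  rewrite /tower_pt; case: (unlift ord0 k) => [i|]; last exact: cvg_id.
  exact/differentiable_continuous/derivable1_diffP/delta_der.
have peval_cont G : {for t, continuous ((fun s => peval G (tau s)) : C^o -> C^o)}.
  exact: (fun_subring_meval (continuous_at_subring t) G tau_cont).
exact: (cvgM (peval_cont (N j)) (cvgV Dt (peval_cont (D j)))).
Qed.

Lemma psiQ_common_nonroot : exists s, forall j, (psiQ j).[s] != 0.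
Proof.
have /closed_nonrootP[s] : \prod_j psiQ j != 0.
  by apply/prodf_neq0 => j _; exact: psiQ_neq0.
by rewrite /root horner_prod => /prodf_neq0 psiQs; exists s => j; exact: psiQs.
Qed.

Lemma rp_fun_eq_cst j c : psiP j = c *: psiQ j ->
  forall t, U t -> (forall k, peval (D k) (tau t) != 0) -> rp_fun delta N D j t = c.
Proof.
move=> psi_c t Ut Dt; apply/eqP; rewrite -subr_eq0; apply/eqP.
pose F := mpoly.mpolyX C (mpoly.mnm1 j) - mpoly.mpolyC r c.
have peval_F y : peval F y = y j - c.
  by rewrite /peval mpoly.mevalB mpoly.mevalXU mpoly.mevalC.
rewrite -(peval_F (fun k => rp_fun delta N D k t)).
apply: (radical_vanishP F).2; last by exists t.
by move=> _ [s [psiQs ->]]; rewrite peval_F psi_c hornerZ mulfK ?subrr.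
Qed.

Lemma psi_nonconst : (exists j t, [/\ U t, peval (D j) (tau t) != 0 &
    'D_1 (rp_fun delta N D j : C^o -> C^o) t != 0]) ->
  exists j, forall c : C, psiP j != c *: psiQ j.
Proof.
move=> [j [t0 [Ut0 Dt0 x_der]]]; apply: contrapT => /forallNP psi_cst.
have [c /rp_fun_eq_cst x_c] : exists c, psiP j = c *: psiQ j.
  by have /existsNP[c /negP/negPn/eqP] := psi_cst j; exists c.
have [s0 /psiQ_neq0P[Ls0 Ds0]] := psiQ_common_nonroot.
have [q q_neq0 q_roots] := @tau_zeros_in_roots (\prod_k D k) (ex_intro2 _ _ s0 Ls0
  (proj2 (meval_prod_neq0 D (phi s0)) Ds0)).
move/eqP: x_der; apply; apply: (derive_dnbhs_cst (rp_fun_continuous Ut0 Dt0) (c := c)).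
have U_near : \forall t \near (t0 : C^o)^', U t.
  exact: nbhs_dnbhs (open_nbhs_nbhs (conj U_open Ut0)).
apply: filterS2 (poly_neq0_near t0 q_neq0) U_near => t qt Ut; apply: x_c => //.
by apply/meval_prod_neq0; apply: contra_neq qt; exact: q_roots.
Qed.

End RadicalParametrization.

Lemma radical_variety_rational r (N D : 'I_r -> cpoly R m.+1) :
  open (U : set C^o) -> (forall i t, U t -> derivable (delta i : C^o -> C^o) t 1) ->
  radical_parametrization delta U N D -> rational_curve (radical_variety delta U N D).
Proof.
move=> U_open delta_der [/ltnW r_gt0 D_tau_neq0 x_der].
have /choice[numN /choice[expN numNP]] := fun j => ratfunP (ratfun_peval_phi (N j)).
have /choice[numD /choice[expD numDP]] := fun j => ratfunP (ratfun_peval_phi (D j)).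
exists (fun j => numN j * L ^+ (expD j).+1), (fun j => numD j * L ^+ (expN j).+1).
split; first exact: (psiQ_neq0 D_tau_neq0 expN numDP).
split; first exact: (psi_nonconst r_gt0 D_tau_neq0 numNP numDP U_open delta_der x_der).
exact: (radical_variety_eq r_gt0 numNP numDP).
Qed.

End TowerParametrization.

Theorem theorem4p9 (R : realType) (m : nat) (e : 'I_m -> nat) (U : set R[i])
    (delta : 'I_m -> R[i] -> R[i]) (A B : forall i : 'I_m, cpoly R i.+1) :
  radical_tower delta e U A B ->
  rational_curve (tower_variety delta U) ->
  forall (r : nat) (N D : 'I_r -> cpoly R m.+1),
    radical_parametrization delta U N D ->
    rational_curve (radical_variety delta U N D).
Proof.
move=> [[U_open _] delta_der _ _ _] [P [Q [Q_neq0 [_ tower_variety_eq]]]] r N D.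
exact: radical_variety_rational Q_neq0 tower_variety_eq r N D U_open delta_der.
Qed.
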